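(* Let $H$ be a Hilbert space and, for $i=1,2$, let $(K_i,[\cdot,\cdot]_i)$ be Pontryagin spaces, $A_i$ self-adjoint linear relations in $K_i$, $z_0\in\rho(A_1)\cap\rho(A_2)\cap\mathbb{C}^+$, $\Gamma_i:H\to K_i$ bounded, and $$Q_i(z)=Q_i(z_0)^*+(z-\bar z_0)\Gamma_i^+\big(I_i+(z-z_0)(A_i-z)^{-1}\big)\Gamma_i .$$ Let $\tilde K=K_1[+]K_2$ (orthogonal direct sum), let $A=A_1\oplus A_2=\{\{k_1[+]k_2,h_1[+]h_2\}:\{k_i,h_i\}\in A_i\}$, and let $\Gamma:H\to\tilde K$, $\Gamma h=\Gamma_1h[+]\Gamma_2h$, so that $\Gamma^+(k_1[+]k_2)=\Gamma_1^+k_1+\Gamma_2^+k_2$. Then $Q:=Q_1+Q_2$ satisfies $$Q(z)=Q_1(z_0)^*+Q_2(z_0)^*+(z-\bar z_0)\Gamma^+\big(I+(z-z_0)(A-z)^{-1}\big)\Gamma. \tag{14}$$ (i) If $\Gamma^+:\tilde K\to H$ is injective, then the representation (14) is minimal, i.e. $\tilde K=\overline{\operatorname{span}}\{(I+(z-z_0)(A-z)^{-1})\Gamma h: z\in\rho(A),h\in H\}$. (ii) Suppose instead that $A_i$ are bounded self-adjoint operators in $K_i$, $\Gamma_{0i}:H\to K_i$ are bounded, $Q_i(z)=\Gamma_{0i}^+(A_i-z)^{-1}\Gamma_{0i}$, and with $\Gamma_0h:=\Gamma_{01}h[+]\Gamma_{02}h$ and $A=A_1\oplus A_2$ the representation $Q(z):=Q_1(z)+Q_2(z)=\Gamma_0^+(A-z)^{-1}\Gamma_0$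 is minimal, i.e. $K_1[+]K_2=\overline{\operatorname{span}}\{(A-z)^{-1}\Gamma_0h:z\in\rho(A),h\in H\}$. If at least one of $\Gamma_{01},\Gamma_{02}$ is injective, then: whenever $f\in H$ satisfies $(f,Q(z)h)=0$ for all $z\in\rho(A)$ and all $h\in H$, it follows that $f=0$.
   Context: $H$ is a Hilbert space with inner product $(\cdot,\cdot)$. A Pontryagin space is a Krein space whose indefinite inner product $[\cdot,\cdot]$ has finitely many negative squares. For a bounded operator $\Gamma:H\to K$ into a Pontryagin space, $\Gamma^+:K\to H$ is defined by $(h,\Gamma^+k)=[\Gamma h,k]$. $K_1[+]K_2$ denotes the orthogonal direct sum with inner product $[k_1+k_2,k_1'+k_2']=[k_1,k_1']_1+[k_2,k_2']_2$. *)

From HB Require Import structures.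
From mathcomp Require Import all_boot all_order all_algebra.
From mathcomp Require Import reals complex.
From Stdlib Require Import ClassicalEpsilon.
Set Implicit Arguments. Unset Strict Implicit. Unset Printing Implicit Defensive.
Import Order.TTheory GRing.Theory Num.Theory.
Local Open Scope ring_scope.

Section Defs.
Variable R : realType.
Local Notation C := (R[i]).

(* linear relations in V, given by their graph *)
Definition relation (V : lmodType C) : Type := V -> V -> Prop.

Section OneSpace.
Variable V : lmodType C.

Definition nrm2 (ip : V -> V -> C) (x : V) : R := complex.Re (ip x x).

Definition inner_prod (ip : V -> V -> C) : Prop :=
  (forall (a : C) (x x' y : V), ip (a *: x + x') y = a * ip x y + ip x' y) /\
  (forall x y : V, ip y x = Num.conj (ip x y)) /\
  (forall x : V, 0 <= ip x x) /\
  (forall x : V, ip x x = 0 -> x = 0).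

Definition complete (ip : V -> V -> C) : Prop :=
  forall u : nat -> V,
    (forall e : R, 0 < e -> exists N, forall m n, (N <= m)%N -> (N <= n)%N ->
        nrm2 ip (u m - u n) < e) ->
    exists l : V, forall e : R, 0 < e -> exists N, forall n, (N <= n)%N ->
        nrm2 ip (u n - l) < e.

Definition hilbert (ip : V -> V -> C) : Prop := inner_prod ip /\ complete ip.

Definition linearF (W : lmodType C) (T : V -> W) : Prop :=
  forall (a : C) (x y : V), T (a *: x + y) = a *: T x + T y.

(* Pontryagin space: a Hilbert space (V, ip) with a fundamental symmetry J
   (linear, J^2 = I, ip-selfadjoint) whose negative eigenspace is finite
   dimensional; the indefinite inner product is [x,y] = ip (J x) y. *)
Definition pontryagin (ip : V -> V -> C) (J : V -> V) : Prop :=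
  hilbert ip /\ linearF J /\ (forall x, J (J x) = x) /\
  (forall x y, ip (J x) y = ip x (J y)) /\
  exists n (e : 'I_n -> V), forall x, J x = - x ->
    exists c : 'I_n -> C, x = \sum_(i < n) c i *: e i.

Definition kform (ip : V -> V -> C) (J : V -> V) (x y : V) : C := ip (J x) y.


Definition lin_rel (A : relation V) : Prop :=
  A 0 0 /\ forall (a : C) f g f' g', A f g -> A f' g' -> A (a *: f + f') (a *: g + g').

Definition adj_rel (kf : V -> V -> C) (A : relation V) : relation V :=
  fun k h => forall f g, A f g -> kf h f = kf k g.

Definition selfadj_rel (kf : V -> V -> C) (A : relation V) : Prop :=
  lin_rel A /\ forall k h, A k h <-> adj_rel kf A k h.

(* (A - z)^{-1} = {{g - z f, f} : {f, g} in A} *)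
Definition inv_shift (A : relation V) (z : C) : relation V :=
  fun k f => exists g, A f g /\ k = g - z *: f.

Definition graph (T : V -> V) : relation V := fun f g => g = T f.

End OneSpace.

Section Bounded.
Variables (V W : lmodType C).
Definition bounded (ipV : V -> V -> C) (ipW : W -> W -> C) (T : V -> W) : Prop :=
  linearF T /\ exists M : R, forall x, nrm2 ipW (T x) <= M * nrm2 ipV x.
End Bounded.

Section OneSpace2.
Variable V : lmodType C.


Definition rho (ip : V -> V -> C) (A : relation V) (z : C) : Prop :=
  exists T : V -> V, bounded ip ip T /\ forall k f, inv_shift A z k f <-> f = T k.

(* the resolvent (A - z)^{-1} as a function (meaningful for z in rho(A)) *)
Definition res (A : relation V) (z : C) (k : V) : V :=
  epsilon (inhabits (0 : V)) (fun f => inv_shift A z k f).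

Definition fspan (S : V -> Prop) : V -> Prop :=
  fun k => exists n (c : 'I_n -> C) (s : 'I_n -> V),
    (forall i, S (s i)) /\ k = \sum_(i < n) c i *: s i.

Definition nclosure (ip : V -> V -> C) (P : V -> Prop) : V -> Prop :=
  fun k => forall e : R, 0 < e -> exists x, P x /\ nrm2 ip (k - x) < e.

End OneSpace2.

Section Adjoints.
Variables (V W : lmodType C).
Definition is_kadj (ipV : V -> V -> C) (kfW : W -> W -> C) (G : V -> W) (Gp : W -> V) :=
  forall h k, ipV h (Gp k) = kfW (G h) k.
End Adjoints.

Definition is_hadj (V : lmodType C) (ip : V -> V -> C) (T Ts : V -> V) :=
  forall x y, ip (T x) y = ip x (Ts y).

Section Sums.
Variables (V1 V2 : lmodType C).
Definition ipsum (ip1 : V1 -> V1 -> C) (ip2 : V2 -> V2 -> C) (x y : V1 * V2) : C :=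
  ip1 x.1 y.1 + ip2 x.2 y.2.
Definition Jsum (J1 : V1 -> V1) (J2 : V2 -> V2) (x : V1 * V2) : V1 * V2 :=
  (J1 x.1, J2 x.2).
Definition rsum (A1 : relation V1) (A2 : relation V2) : relation (V1 * V2)%type :=
  fun k h => A1 k.1 h.1 /\ A2 k.2 h.2.
End Sums.

End Defs.

(* In (i) the resolvent vectors at z = z0 are the vectors Gamma h, so it suffices
   that the range of Gamma is dense.  A vector k orthogonal to that range gives
   [Gamma h, J k] = (Gamma h, k) = 0 for all h, i.e. Gamma^+ (J k) = 0; injectivity
   of Gamma^+ forces J k = 0, hence k = 0.  In a Hilbert space a subspace with
   trivial orthogonal complement is dense (best approximation), which gives (i).
   In (ii), (f, Q(z) h) = (J Gamma_0 f, (A - z)^{-1} Gamma_0 h) in the Hilbert space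
   K_1 (+) K_2, so J Gamma_0 f is orthogonal to a total set, hence Gamma_0 f = 0, and
   injectivity of one component of Gamma_0 gives f = 0. *)
From HB Require Import structures.
From mathcomp Require Import all_boot all_order all_algebra.
From mathcomp Require Import reals complex.
From mathcomp Require Import ring lra.
From Stdlib Require Import ClassicalEpsilon.
Import Order.TTheory GRing.Theory Num.Theory.
Local Open Scope ring_scope.
Local Open Scope complex_scope.
Set Implicit Arguments.
Unset Strict Implicit.

Section ComplexParts.
Variable R : realType.
Local Notation C := (R[i]).
Local Notation Re := (@complex.Re R).
Local Notation Im := (@complex.Im R).

Lemma ReD (a b : C) : Re (a + b) = Re a + Re b. Proof. by case: a; case: b. Qed.
Lemma ReN (a : C) : Re (- a) = - Re a. Proof. by case: a. Qed.
Lemma ReJ (a : C) : Re (Num.conj a) = Re a. Proof. by case: a. Qed.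

Lemma Re_realM (r : R) (c : C) : Re (r%:C * c) = r * Re c.
Proof. by case: c => a b /=; rewrite mul0r subr0. Qed.

Lemma Re_conjiM (c : C) : Re (Num.conj 'i * c) = Im c.
Proof. by case: c => a b /=; rewrite mul0r mulN1r sub0r opprK. Qed.

Lemma complex_eq0 (c : C) : Re c = 0 -> Im c = 0 -> c = 0.
Proof. by case: c => a b /= -> ->. Qed.

Lemma ge0_Re (c : C) : 0 <= c -> 0 <= Re c.
Proof. by rewrite lecE => /andP[]. Qed.

Lemma ge0_real (c : C) : 0 <= c -> c = (Re c)%:C.
Proof. by move=> /ger0_Im; case: c => a b /= ->. Qed.

End ComplexParts.

Section RealFacts.
Variable R : realType.

Lemma le0_of_le_mull (a b : R) : 0 <= b -> (forall t, 0 < t -> a <= t * b) -> a <= 0.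
Proof.
move=> b_ge0 hab; have [a_gt0|//] := ltrP 0 a.
have [b_gt0|b_le0] := ltrP 0 b; last by have := hab 1 ltr01; lra.
have t_gt0 : 0 < a / (2 * b) by rewrite divr_gt0 // mulr_gt0.
have half : a / (2 * b) * b * 2 = a by field; rewrite gt_eqF.
by have := hab _ t_gt0; lra.
Qed.

Definition inv_succ (n : nat) : R := n.+1%:R^-1.

Lemma inv_succ_gt0 n : 0 < inv_succ n. Proof. by rewrite invr_gt0 ltr0Sn. Qed.

Lemma inv_succ_small (e : R) : 0 < e ->
  exists N, forall n, (N <= n)%N -> inv_succ n < e.
Proof.
move=> e_gt0; exists (Num.Def.archi_bound e^-1) => n le_Nn.
rewrite /inv_succ invf_plt ?posrE ?ltr0Sn //.
have einv_ge0 : 0 <= e^-1 by rewrite invr_ge0 ltW.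
apply: (lt_le_trans (archi_boundP einv_ge0)).
by rewrite ler_nat (leq_trans le_Nn).
Qed.

End RealFacts.
Arguments inv_succ {R} n.
Arguments inv_succ_gt0 {R} n.

Section InnerProduct.
Variable R : realType.
Local Notation C := (R[i]).
Variables (V : lmodType C) (ip : V -> V -> C).
Hypothesis Hip : inner_prod ip.
Local Notation N := (nrm2 ip).

Lemma ipDl x x' y : ip (x + x') y = ip x y + ip x' y.
Proof. by have := Hip.1 1 x x' y; rewrite scale1r mul1r. Qed.
Lemma ip0l y : ip 0 y = 0.
Proof. by apply: (addrI (ip 0 y)); rewrite -ipDl !addr0. Qed.
Lemma ipZl a x y : ip (a *: x) y = a * ip x y.
Proof. by have := Hip.1 a x 0 y; rewrite !addr0 ip0l addr0. Qed.
Lemma ipNl x y : ip (- x) y = - ip x y.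
Proof. by rewrite -scaleN1r ipZl mulN1r. Qed.
Lemma ipC x y : ip y x = Num.conj (ip x y).
Proof. exact: Hip.2.1. Qed.
Lemma ipDr x y y' : ip x (y + y') = ip x y + ip x y'.
Proof. by rewrite ipC ipDl rmorphD /= -!ipC. Qed.
Lemma ipZr a x y : ip x (a *: y) = Num.conj a * ip x y.
Proof. by rewrite ipC ipZl rmorphM /= -ipC. Qed.
Lemma ip0r x : ip x 0 = 0.
Proof. by rewrite ipC ip0l rmorph0. Qed.
Lemma ipNr x y : ip x (- y) = - ip x y.
Proof. by rewrite ipC ipNl rmorphN /= -ipC. Qed.
Lemma ipBr x y y' : ip x (y - y') = ip x y - ip x y'.
Proof. by rewrite ipDr ipNr. Qed.

Lemma ip_eq x y : (forall h, ip h x = ip h y) -> x = y.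
Proof.
move=> hxy; apply/eqP; rewrite -subr_eq0; apply/eqP/Hip.2.2.2.
by rewrite ipBr hxy subrr.
Qed.

Lemma ip_eq0 x : (forall h, ip h x = 0) -> x = 0.
Proof. by move=> hx; apply: ip_eq => h; rewrite hx ip0r. Qed.

Lemma nrm2_ge0 x : 0 <= N x.
Proof. exact/ge0_Re/Hip.2.2.1. Qed.

Lemma nrm2_eq0 x : N x = 0 -> x = 0.
Proof. by move=> Nx0; apply: Hip.2.2.2; rewrite (ge0_real (Hip.2.2.1 x)) -/(N x) Nx0. Qed.

Definition rip x y := complex.Re (ip x y).

Lemma ripC x y : rip y x = rip x y.
Proof. by rewrite /rip ipC ReJ. Qed.
Lemma ripDl x x' y : rip (x + x') y = rip x y + rip x' y.
Proof. by rewrite /rip ipDl ReD. Qed.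
Lemma ripDr x y y' : rip x (y + y') = rip x y + rip x y'.
Proof. by rewrite /rip ipDr ReD. Qed.
Lemma ripNr x y : rip x (- y) = - rip x y.
Proof. by rewrite /rip ipNr ReN. Qed.
Lemma ripZl (r : R) x y : rip (r%:C *: x) y = r * rip x y.
Proof. by rewrite /rip ipZl Re_realM. Qed.
Lemma ripZr (r : R) x y : rip x (r%:C *: y) = r * rip x y.
Proof. by rewrite /rip ipZr (conjc_real r : Num.conj _ = _) Re_realM. Qed.

Lemma nrm2D x y : N (x + y) = N x + N y + 2 * rip x y.
Proof. by rewrite /nrm2 -!/(rip _ _) ripDl !ripDr (ripC x y); lra. Qed.
Lemma nrm2N x : N (- x) = N x.
Proof. by rewrite /nrm2 -!/(rip _ _) /rip ipNl ipNr opprK. Qed.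
Lemma nrm2B x y : N (x - y) = N x + N y - 2 * rip x y.
Proof. by rewrite nrm2D nrm2N ripNr; lra. Qed.
Lemma nrm2Z (r : R) x : N (r%:C *: x) = r * r * N x.
Proof. by rewrite /nrm2 -!/(rip _ _) ripZl ripZr mulrA. Qed.

Lemma parallelogram x y : N (x + y) + N (x - y) = 2 * N x + 2 * N y.
Proof. by rewrite nrm2D nrm2B; lra. Qed.

Lemma rip_lbound (t : R) x y : - (2 * t * rip x y) <= N x + t * t * N y.
Proof. by have := nrm2_ge0 (x + t%:C *: y); rewrite nrm2D nrm2Z ripZr; lra. Qed.

Lemma ortho_of_Re_le0 (M : V -> Prop) (MZ : forall a x, M x -> M (a *: x)) v :
  (forall m, M m -> rip v m <= 0) -> forall m, M m -> ip v m = 0.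
Proof.
move=> hle m Mm; have hM y : M y -> rip v y = 0.
  move=> My; apply/eqP; rewrite eq_le hle //=.
  by have := hle _ (MZ (-1) _ My); rewrite scaleN1r ripNr; lra.
apply: complex_eq0; first exact: hM.
by rewrite -Re_conjiM -ipZr -/(rip _ _) hM //; apply: MZ.
Qed.

Lemma ortho_fspan (S : V -> Prop) w :
  (forall v, S v -> ip w v = 0) -> forall v, fspan S v -> ip w v = 0.
Proof.
move=> wS _ [n [c [s [Ss ->]]]].
apply: (big_ind (fun x => ip w x = 0)) => [|x y|i _].
- exact: ip0r.
- by rewrite ipDr => -> ->; rewrite addr0.
- by rewrite ipZr wS // mulr0.
Qed.

Lemma eq0_of_ortho_dense (S : V -> Prop) w : nclosure ip S w ->
  (forall v, S v -> ip w v = 0) -> w = 0.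
Proof.
move=> Sw wS; apply: nrm2_eq0; apply/eqP; rewrite eq_le nrm2_ge0 andbT.
apply/ler_addgt0Pr => e e_gt0; have [v [Sv]] := Sw e e_gt0.
rewrite nrm2B /rip wS // => lt_e; have := nrm2_ge0 v.
rewrite /= mulr0 in lt_e *; lra.
Qed.

Lemma nclosure_sub (S T : V -> Prop) k :
  (forall v, S v -> T v) -> nclosure ip S k -> nclosure ip T k.
Proof. by move=> ST Sk e /Sk[v [/ST Tv lt_e]]; exists v. Qed.

Lemma fspan_gen (S : V -> Prop) v : S v -> fspan S v.
Proof.
by move=> Sv; exists 1%N, (fun=> 1), (fun=> v); split=> //; rewrite big_ord1 scale1r.
Qed.

End InnerProduct.

Definition cauchy (R : realType) (V : lmodType R[i]) (ip : V -> V -> R[i])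
    (u : nat -> V) :=
  forall e : R, 0 < e -> exists N, forall m n, (N <= m)%N -> (N <= n)%N ->
    nrm2 ip (u m - u n) < e.

Definition cvg_to (R : realType) (V : lmodType R[i]) (ip : V -> V -> R[i])
    (u : nat -> V) (l : V) :=
  forall e : R, 0 < e -> exists N, forall n, (N <= n)%N -> nrm2 ip (u n - l) < e.

Section BestApproximation.
Variable R : realType.
Local Notation C := (R[i]).
Variables (V : lmodType C) (ip : V -> V -> C).
Hypotheses (Hip : inner_prod ip) (Hc : complete ip).
Local Notation N := (nrm2 ip).
Variable M : V -> Prop.
Hypotheses (M0 : M 0) (MD : forall x y, M x -> M y -> M (x + y))
  (MZ : forall a x, M x -> M (a *: x)).
Variable k : V.

Let dists : classical_sets.set R := fun r => exists m, M m /\ r = N (k - m).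
Let dist2 := inf dists.

Let dists_has_inf : classical_sets.has_inf dists.
Proof.
split; first by exists (N (k - 0)), 0.
by exists 0 => _ [m [_ ->]]; exact: nrm2_ge0.
Qed.

Let dist2_le m : M m -> dist2 <= N (k - m).
Proof. by move=> Mm; apply: (ge_inf dists_has_inf.2); exists m. Qed.

Let exists_min_seqimizer n : exists m, M m /\ N (k - m) < dist2 + inv_succ n.
Proof.
have [_ [m [Mm ->]] lt_m] := inf_adherent (inv_succ_gt0 n) dists_has_inf.
by exists m.
Qed.

Let min_seq n := proj1_sig (constructive_indefinite_description _ (exists_min_seqimizer n)).

Let min_seqP n : M (min_seq n) /\ N (k - min_seq n) < dist2 + inv_succ n.
Proof. exact: proj2_sig (constructive_indefinite_description _ (exists_min_seqimizer n)). Qed.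

(* the midpoint of min_seq n and min_seq p lies in M, so the parallelogram law
   bounds their distance *)
Let min_seq_dist n p :
  N (min_seq n - min_seq p) < 2 * inv_succ n + 2 * inv_succ p.
Proof.
have [Mn ltn] := min_seqP n; have [Mp ltp] := min_seqP p.
pose mid := 2^-1%:C *: (min_seq n + min_seq p).
have mid_dist : 2%:C *: (k - mid) = (k - min_seq p) + (k - min_seq n).
  rewrite scalerBr scalerA -rmorphM mulfV ?pnatr_eq0 // scale1r.
  by rewrite -[2%:R]/(1 + 1) rmorphD scalerDl scale1r opprD addrACA addrC.
have diff : min_seq n - min_seq p = (k - min_seq p) - (k - min_seq n).
  by rewrite opprB [RHS]addrC [RHS]addrA subrK.
have := dist2_le (MZ 2^-1%:C (MD Mn Mp)); rewrite -/mid.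
have := parallelogram Hip (k - min_seq p) (k - min_seq n).
by rewrite -mid_dist nrm2Z // -diff; lra.
Qed.

Let min_seq_cauchy : cauchy ip min_seq.
Proof.
move=> e e_gt0; have [N0 hN0] := inv_succ_small (divr_gt0 e_gt0 (ltr0n _ 4)).
exists N0 => m n hm hn; apply: (lt_le_trans (min_seq_dist m n)).
by have := hN0 _ hm; have := hN0 _ hn; lra.
Qed.

(* first variation of the distance along the direction m *)
Let min_seq_variation m (t : R) n : M m ->
  2 * t * rip ip (k - min_seq n) m <= inv_succ n + t * t * N m.
Proof.
move=> Mm; have [Mn ltn] := min_seqP n.
have := dist2_le (MD Mn (MZ t%:C Mm)).
by rewrite opprD addrA nrm2B // nrm2Z // ripZr //; lra.
Qed.

Let min_seq_limit_rip_le0 l m : cvg_to ip min_seq l -> M m -> rip ip (k - l) m <= 0.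
Proof.
move=> cvg_l Mm; apply: (le0_of_le_mull (nrm2_ge0 Hip m)) => t t_gt0.
suff : 2 * t * rip ip (k - l) m <= 2 * t * (t * nrm2 ip m).
  by rewrite ler_pM2l // mulr_gt0.
rewrite -subr_le0; apply/ler_addgt0Pr => e e_gt0; rewrite add0r.
have e2_gt0 : 0 < e / 2 by rewrite divr_gt0.
have [N1 hN1] := inv_succ_small e2_gt0; have [N2 hN2] := cvg_l _ e2_gt0.
pose n := maxn N1 N2.
have := hN1 n (leq_maxl _ _); have := hN2 n (leq_maxr _ _).
have := min_seq_variation t n Mm; have := rip_lbound Hip t (l - min_seq n) m.
have -> : k - min_seq n = k - l + (l - min_seq n) by rewrite addrA subrK.
by rewrite (ripDl Hip (k - l)) -(nrm2N Hip (l - _)) opprB; lra.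
Qed.

Hypothesis ortho_trivial : forall v, (forall m, M m -> ip v m = 0) -> v = 0.

Theorem nclosure_of_ortho_trivial : nclosure ip M k.
Proof.
have [l cvg_l] := Hc min_seq_cauchy.
have -> : k = l.
  apply/subr0_eq/ortho_trivial/(ortho_of_Re_le0 Hip MZ) => m.
  exact: min_seq_limit_rip_le0.
move=> e /cvg_l[n0 hn0]; exists (min_seq n0); split; first exact: (min_seqP n0).1.
by rewrite -(nrm2N Hip) opprB hn0.
Qed.

End BestApproximation.

Lemma linearF0 (R : realType) (V W : lmodType R[i]) (T : V -> W) :
  linearF T -> T 0 = 0.
Proof.
move=> lT; have := lT 1 0 0; rewrite !scale1r !addr0 => T00.
by apply: (addrI (T 0)); rewrite addr0 -T00.
Qed.

Lemma linearFD (R : realType) (V W : lmodType R[i]) (T : V -> W) x y :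
  linearF T -> T (x + y) = T x + T y.
Proof. by move=> lT; have := lT 1 x y; rewrite !scale1r. Qed.

Lemma linearFZ (R : realType) (V W : lmodType R[i]) (T : V -> W) a x :
  linearF T -> T (a *: x) = a *: T x.
Proof. by move=> lT; have := lT a x 0; rewrite !addr0 linearF0 // addr0. Qed.

Lemma res_spec (R : realType) (V : lmodType R[i]) (A : relation V) z k f :
  inv_shift A z k f -> inv_shift A z k (res A z k).
Proof. by move=> Af; apply: epsilon_spec; exists f. Qed.

Lemma rho_res (R : realType) (V : lmodType R[i]) (ip : V -> V -> R[i]) (A : relation V) z k :
  rho ip A z -> inv_shift A z k (res A z k) /\ forall f, inv_shift A z k f -> f = res A z k.
Proof.
move=> [T [_ hT]]; have Ares : inv_shift A z k (res A z k).
  by apply: (@res_spec _ _ _ _ _ (T k)); apply/hT.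
by split=> // f /hT->; apply/esym/hT.
Qed.

Section FundamentalSymmetry.
Variable R : realType.
Variables (V : lmodType R[i]) (ip : V -> V -> R[i]) (J : V -> V).
Hypotheses (Hip : inner_prod ip) (JK : forall x, J (J x) = x)
  (J_sym : forall x y, ip (J x) y = ip x (J y)).

Lemma fsym0 : J 0 = 0.
Proof. by apply: (ip_eq0 Hip) => h; rewrite (ipC Hip) J_sym (ip0l Hip) rmorph0. Qed.

Lemma fsym_eq0 x : J x = 0 -> x = 0.
Proof. by move=> Jx0; rewrite -[x]JK Jx0 fsym0. Qed.

End FundamentalSymmetry.

Section OrthogonalSum.
Variable R : realType.
Local Notation C := (R[i]).
Variables (V1 V2 : lmodType C) (ip1 : V1 -> V1 -> C) (ip2 : V2 -> V2 -> C).
Hypotheses (Hip1 : inner_prod ip1) (Hip2 : inner_prod ip2).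
Local Notation ip := (ipsum ip1 ip2).

Lemma nrm2_sum x : nrm2 ip x = nrm2 ip1 x.1 + nrm2 ip2 x.2.
Proof. by rewrite /nrm2 /ipsum ReD. Qed.

Lemma ipsum_inner : inner_prod ip.
Proof.
split; [|split; [|split]].
- move=> a x x' y; rewrite /ipsum /= (ipDl Hip1) (ipDl Hip2) (ipZl Hip1) (ipZl Hip2).
  by rewrite mulrDr addrACA.
- by move=> x y; rewrite /ipsum rmorphD /= -(ipC Hip1) -(ipC Hip2).
- by move=> x; rewrite /ipsum addr_ge0 // ?Hip1.2.2.1 ?Hip2.2.2.1.
- move=> [x1 x2]; rewrite /ipsum /= => /eqP.
  rewrite paddr_eq0 ?(Hip1.2.2.1, Hip2.2.2.1) // => /andP[/eqP h1 /eqP h2].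
  by rewrite (Hip1.2.2.2 _ h1) (Hip2.2.2.2 _ h2).
Qed.

Lemma cauchy_fst u : cauchy ip u -> cauchy ip1 (fun n => (u n).1).
Proof.
move=> cu e /cu[N hN]; exists N => m n hm hn; have := hN m n hm hn.
by rewrite nrm2_sum; have := nrm2_ge0 Hip2 ((u m).2 - (u n).2); lra.
Qed.

Lemma cauchy_snd u : cauchy ip u -> cauchy ip2 (fun n => (u n).2).
Proof.
move=> cu e /cu[N hN]; exists N => m n hm hn; have := hN m n hm hn.
by rewrite nrm2_sum; have := nrm2_ge0 Hip1 ((u m).1 - (u n).1); lra.
Qed.

Lemma ipsum_complete : complete ip1 -> complete ip2 -> complete ip.
Proof.
move=> c1 c2 u cu; have [l1 hl1] := c1 _ (cauchy_fst cu).
have [l2 hl2] := c2 _ (cauchy_snd cu).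
exists (l1, l2) => e e_gt0; have e2_gt0 : 0 < e / 2 by rewrite divr_gt0.
have [N1 hN1] := hl1 _ e2_gt0; have [N2 hN2] := hl2 _ e2_gt0.
exists (maxn N1 N2) => n hn; rewrite nrm2_sum /=.
have := hN1 n (leq_trans (leq_maxl _ _) hn).
by have := hN2 n (leq_trans (leq_maxr _ _) hn); lra.
Qed.

Lemma Jsum_involutive (J1 : V1 -> V1) (J2 : V2 -> V2) :
  (forall x, J1 (J1 x) = x) -> (forall x, J2 (J2 x) = x) ->
  forall x, Jsum J1 J2 (Jsum J1 J2 x) = x.
Proof. by move=> JK1 JK2 [x1 x2]; rewrite /Jsum /= JK1 JK2. Qed.

Lemma Jsum_sym (J1 : V1 -> V1) (J2 : V2 -> V2) :
  (forall x y, ip1 (J1 x) y = ip1 x (J1 y)) -> (forall x y, ip2 (J2 x) y = ip2 x (J2 y)) ->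
  forall x y, ip (Jsum J1 J2 x) y = ip x (Jsum J1 J2 y).
Proof. by move=> sym1 sym2 x y; rewrite /ipsum /= sym1 sym2. Qed.

Lemma inv_shift_sum (A1 : relation V1) (A2 : relation V2) z k f :
  inv_shift (rsum A1 A2) z k f <-> inv_shift A1 z k.1 f.1 /\ inv_shift A2 z k.2 f.2.
Proof.
split=> [[g [[A1f A2f] ->]]|[[g1 [A1f e1]] [g2 [A2f e2]]]].
  by split; [exists g.1 | exists g.2].
by exists (g1, g2); split; [split | case: k e1 e2 => k1 k2 /= -> ->].
Qed.

Lemma rho_sum (A1 : relation V1) (A2 : relation V2) z :
  rho ip1 A1 z -> rho ip2 A2 z -> rho ip (rsum A1 A2) z.
Proof.
move=> [T1 [[lT1 [M1 hM1]] hT1]] [T2 [[lT2 [M2 hM2]] hT2]].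
exists (fun k => (T1 k.1, T2 k.2)); split.
  split=> [a x y|]; first by rewrite lT1 lT2.
  exists (`|M1| + `|M2|) => x; rewrite !nrm2_sum /=.
  have := hM1 x.1; have := hM2 x.2.
  have := nrm2_ge0 Hip1 x.1; have := nrm2_ge0 Hip2 x.2.
  have := ler_norm M1; have := ler_norm M2.
  have := normr_ge0 M1; have := normr_ge0 M2.
  nra.
move=> k [f1 f2]; rewrite inv_shift_sum hT1 hT2 /=.
by split=> [[-> ->]|[-> ->]].
Qed.

Lemma res_sum (A1 : relation V1) (A2 : relation V2) z k :
  rho ip (rsum A1 A2) z -> res (rsum A1 A2) z k = (res A1 z k.1, res A2 z k.2).
Proof.
move=> /(rho_res k)[/inv_shift_sum[s1 s2] res_uniq].
by symmetry; apply/res_uniq/inv_shift_sum; split; [exact: res_spec s1 | exact: res_spec s2].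
Qed.

End OrthogonalSum.

Lemma linearF_pair (R : realType) (H V1 V2 : lmodType R[i]) (G1 : H -> V1) (G2 : H -> V2) :
  linearF G1 -> linearF G2 -> linearF (fun h => (G1 h, G2 h)).
Proof. by move=> lG1 lG2 a x y; rewrite lG1 lG2. Qed.

Section KreinAdjoint.
Variable R : realType.
Local Notation C := (R[i]).
Variables (H K : lmodType C) (ipH : H -> H -> C) (ip : K -> K -> C) (J : K -> K).
Hypotheses (HipH : inner_prod ipH) (Hip : inner_prod ip).
Hypotheses (JK : forall x, J (J x) = x) (J_sym : forall x y, ip (J x) y = ip x (J y)).
Variables (G : H -> K) (Gp : K -> H).
Hypotheses (lG : linearF G) (Gadj : is_kadj ipH (kform ip J) G Gp).

Lemma kadj0 : Gp 0 = 0.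
Proof. by apply: (ip_eq0 HipH) => h; rewrite Gadj /kform (ip0r Hip). Qed.

Lemma kadj_fsym_ortho v : (forall h, ip v (G h) = 0) -> Gp (J v) = 0.
Proof.
move=> v_ortho; apply: (ip_eq0 HipH) => h.
by rewrite Gadj /kform J_sym JK (ipC Hip) v_ortho rmorph0.
Qed.

Hypothesis Hc : complete ip.

Theorem range_dense_of_kadj_injective : injective Gp ->
  forall k, nclosure ip (fun v => exists h, v = G h) k.
Proof.
move=> Gp_inj k; apply: nclosure_of_ortho_trivial => //.
- by exists 0; rewrite linearF0.
- by move=> _ _ [x ->] [y ->]; exists (x + y); rewrite linearFD.
- by move=> a _ [x ->]; exists (a *: x); rewrite linearFZ.
move=> v v_ortho; apply: (fsym_eq0 Hip JK J_sym); apply: Gp_inj.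
by rewrite kadj0 kadj_fsym_ortho // => h; apply: v_ortho; exists h.
Qed.

End KreinAdjoint.

Section PairAdjoint.
Variable R : realType.
Local Notation C := (R[i]).
Variables (H K1 K2 : lmodType C) (ipH : H -> H -> C).
Variables (ip1 : K1 -> K1 -> C) (J1 : K1 -> K1) (ip2 : K2 -> K2 -> C) (J2 : K2 -> K2).
Variables (G1 : H -> K1) (G2 : H -> K2) (G1p : K1 -> H) (G2p : K2 -> H).
Hypotheses (HipH : inner_prod ipH)
  (G1adj : is_kadj ipH (kform ip1 J1) G1 G1p) (G2adj : is_kadj ipH (kform ip2 J2) G2 G2p).

Lemma kadj_pair : is_kadj ipH (kform (ipsum ip1 ip2) (Jsum J1 J2))
  (fun h => (G1 h, G2 h)) (fun k => G1p k.1 + G2p k.2).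
Proof. by move=> h k; rewrite (ipDr HipH) G1adj G2adj. Qed.

Lemma kadj_pairE Gp : is_kadj ipH (kform (ipsum ip1 ip2) (Jsum J1 J2))
    (fun h => (G1 h, G2 h)) Gp ->
  forall k, Gp k = G1p k.1 + G2p k.2.
Proof. by move=> Gadj k; apply: (ip_eq HipH) => h; rewrite Gadj kadj_pair. Qed.

End PairAdjoint.

Unset Implicit Arguments.
Theorem lemma4 (R : realType) (H K1 K2 : lmodType R[i])
  (ipH : H -> H -> R[i])
  (ip1 : K1 -> K1 -> R[i]) (J1 : K1 -> K1)
  (ip2 : K2 -> K2 -> R[i]) (J2 : K2 -> K2) :
  hilbert ipH -> pontryagin ip1 J1 -> pontryagin ip2 J2 ->
  (forall (A1 : relation K1) (A2 : relation K2) (z0 : R[i])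
     (G1 : H -> K1) (G2 : H -> K2) (G1p : K1 -> H) (G2p : K2 -> H)
     (Q1 Q2 : R[i] -> H -> H) (Q1s Q2s : H -> H),
     selfadj_rel (kform ip1 J1) A1 -> selfadj_rel (kform ip2 J2) A2 ->
     rho ip1 A1 z0 -> rho ip2 A2 z0 -> 0 < complex.Im z0 ->
     bounded ipH ip1 G1 -> bounded ipH ip2 G2 ->
     is_kadj ipH (kform ip1 J1) G1 G1p -> is_kadj ipH (kform ip2 J2) G2 G2p ->
     is_hadj ipH (Q1 z0) Q1s -> is_hadj ipH (Q2 z0) Q2s ->
     (forall z, rho ip1 A1 z -> forall h,
        Q1 z h = Q1s h + (z - Num.conj z0) *: G1p (G1 h + (z - z0) *: res A1 z (G1 h))) ->
     (forall z, rho ip2 A2 z -> forall h,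
        Q2 z h = Q2s h + (z - Num.conj z0) *: G2p (G2 h + (z - z0) *: res A2 z (G2 h))) ->
     let A := rsum A1 A2 in
     let G := fun h : H => (G1 h, G2 h) in
     let ipK := ipsum ip1 ip2 in
     let kfK := kform ipK (Jsum J1 J2) in
     (forall Gp : K1 * K2 -> H, is_kadj ipH kfK G Gp ->
        (forall z, rho ip1 A1 z -> rho ip2 A2 z -> forall h,
           Q1 z h + Q2 z h = Q1s h + Q2s h +
             (z - Num.conj z0) *: Gp (G h + (z - z0) *: res A z (G h))) /\
        (injective Gp ->
           forall k : K1 * K2, nclosure ipK
             (fspan (fun v => exists z h, rho ipK A z /\
                       v = G h + (z - z0) *: res A z (G h))) k))) /\
  (forall (A1 : K1 -> K1) (A2 : K2 -> K2)
     (G01 : H -> K1) (G02 : H -> K2) (G01p : K1 -> H) (G02p : K2 -> H),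
     bounded ip1 ip1 A1 -> bounded ip2 ip2 A2 ->
     (forall x y, kform ip1 J1 (A1 x) y = kform ip1 J1 x (A1 y)) ->
     (forall x y, kform ip2 J2 (A2 x) y = kform ip2 J2 x (A2 y)) ->
     bounded ipH ip1 G01 -> bounded ipH ip2 G02 ->
     is_kadj ipH (kform ip1 J1) G01 G01p -> is_kadj ipH (kform ip2 J2) G02 G02p ->
     let A := rsum (graph A1) (graph A2) in
     let G0 := fun h : H => (G01 h, G02 h) in
     let ipK := ipsum ip1 ip2 in
     let Q := fun (z : R[i]) (h : H) =>
        G01p (res (graph A1) z (G01 h)) + G02p (res (graph A2) z (G02 h)) in
     (forall k : K1 * K2, nclosure ipK
        (fspan (fun v => exists z h, rho ipK A z /\ v = res A z (G0 h))) k) ->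
     (injective G01 \/ injective G02) ->
     forall f : H, (forall z h, rho ipK A z -> ipH f (Q z h) = 0) -> f = 0).
Proof.
move=> [HipH _] [[Hip1 Hc1] [_ [JK1 [Jsym1 _]]]] [[Hip2 Hc2] [_ [JK2 [Jsym2 _]]]].
have HipK := ipsum_inner Hip1 Hip2.
have JK := Jsum_involutive JK1 JK2; have Jsym := Jsum_sym Jsym1 Jsym2.
split.
- move=> A1 A2 z0 G1 G2 G1p G2p Q1 Q2 Q1s Q2s _ _ rho1 rho2 _ [lG1 _] [lG2 _]
    G1adj G2adj _ _ eQ1 eQ2 A G ipK kfK Gp Gadj.
  have GpE := kadj_pairE HipH G1adj G2adj Gadj.
  split=> [z rz1 rz2 h|Gp_inj k].
    rewrite eQ1 // eQ2 // GpE /A (res_sum _ (rho_sum Hip1 Hip2 rz1 rz2)) /=.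
    by rewrite scalerDr addrACA.
  apply: nclosure_sub (range_dense_of_kadj_injective HipH HipK JK Jsym
    (linearF_pair lG1 lG2) Gadj (ipsum_complete Hip1 Hip2 Hc1 Hc2) Gp_inj k).
  move=> _ [h ->]; apply: fspan_gen; exists z0, h; split.
    exact: rho_sum.
  by rewrite subrr scale0r addr0.
- move=> A1 A2 G01 G02 G01p G02p _ _ _ _ [lG1 _] [lG2 _] G1adj G2adj A G0 ipK Q
    G0_total G0_inj f f_ortho.
  have w_ortho z h : rho ipK A z -> ipK (Jsum J1 J2 (G0 f)) (res A z (G0 h)) = 0.
    move=> rz; rewrite /A (res_sum _ rz); have := f_ortho z h rz.
    by rewrite /Q (kadj_pair HipH G1adj G2adj f (res _ z (G01 h), res _ z (G02 h))).
  have /= [] : Jsum J1 J2 (G0 f) = 0.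
    apply: (eq0_of_ortho_dense HipK (G0_total _)); apply: ortho_fspan => // _ [z [h [rz ->]]].
    exact: w_ortho.
  move=> /(fsym_eq0 Hip1 JK1 Jsym1) G1f /(fsym_eq0 Hip2 JK2 Jsym2) G2f.
  by case: G0_inj => inj; apply: inj; rewrite ?G1f ?G2f linearF0.
Qed.
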